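(* Let $P=(I,\emptyset,\{\omega\})$ be a reduced presentation. Then $\mathbf C_\omega$ is embeddable in $\mathbf B_\Delta$.
   Context: Wajsberg hoops: basic hoops satisfying $(x\to y)\to y\approx(y\to x)\to x$. $\mathbf{\L}_n=\Gamma(\mathbb Z,n)$ is the Wajsberg hoop on $\{0,\dots,n\}$ with $ab=\max\{a+b-n,0\}$, $a\to b=\min\{n-a+b,n\}$; $\mathbf C_\omega$ is the negative cone of $\mathbb Z$, i.e. the free monoid on one generator $c$ with $c^l\to c^m=c^{\max(l-m,0)}$. $X{\downarrow}$ = set of divisors of elements of $X$. A presentation $(I,\emptyset,\{\omega\})$ with $I$ a finite subset of $\mathbb N\setminus\{0\}$ is reduced if no $m\in I$ divides any element of $I\setminus\{m\}$. For such $P$: $\Delta=\{(k,h,2):0\le h<k\in I{\downarrow},\gcd(k,h)=1\}\cup\{(0,0,3)\}$; $\mathbf A_\Delta=\prod_{(k,h,2)\in\Delta}\mathbf{\L}_k\times\mathbf C_\omega$ (factor $\mathbf{\L}_k$ at index $(k,h,2)$, factor $\mathbf C_\omega$ at index $(0,0,3)$); $\bar g(k,h,2)=h\in\mathbf{\L}_k$, $\bar g(0,0,3)=c$; $\mathbf B_\Delta$ is the subalgebra of $\mathbf A_\Delta$ generated by $\bar g$. *)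

From HB Require Import structures.
From mathcomp Require Import all_boot.
Set Implicit Arguments. Unset Strict Implicit. Unset Printing Implicit Defensive.

(* L_n = Gamma(Z, n) on {0,...,n}:  ab = max(a+b-n, 0),                     *)
(* a -> b = min(n-a+b, n), unit n.  (Truncated nat subtraction = max(.,0).) *)
Definition Lmul (n a b : nat) : nat := a + b - n.
Definition Limp (n a b : nat) : nat := minn (n - a + b) n.
Definition Lone (n : nat) : nat := n.

(* C_omega = negative cone of Z = free monoid on c; c^l is encoded by l.   *)
Definition Cmul (l m : nat) : nat := l + m.
Definition Cimp (l m : nat) : nat := m - l.
Definition Cone : nat := 0.

(* I{down}: divisors of elements of I (I a finite set of positive naturals, *)
(* given as a sequence); all such divisors lie in 1 .. max I.              *)
Definition Idown (I : seq nat) : seq nat :=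
  [seq d <- iota 1 (\max_(m <- I) m) | has (fun m => d %| m) I].

(* triple (k,h,2) of the paper is encoded by the pair (k,h).               *)
Definition Delta2 (I : seq nat) : seq (nat * nat) :=
  [seq (k, h) | k <- Idown I, h <- [seq h <- iota 0 k | coprime k h]].

Definition DIdx (I : seq nat) : finType := seq_sub (Delta2 I).

(* A_Delta = prod_{(k,h,2) in Delta} L_k  x  C_omega :                     *)
(* first component = the L_k-factors, second component = the C_omega      *)
(* factor at index (0,0,3).                                                *)
Definition AD (I : seq nat) : Type := ({ffun DIdx I -> nat} * nat)%type.

Definition ADmul (I : seq nat) (x y : AD I) : AD I :=
  ([ffun i => Lmul (ssval i).1 (x.1 i) (y.1 i)], Cmul x.2 y.2).
Definition ADimp (I : seq nat) (x y : AD I) : AD I :=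
  ([ffun i => Limp (ssval i).1 (x.1 i) (y.1 i)], Cimp x.2 y.2).
Definition ADone (I : seq nat) : AD I :=
  ([ffun i => Lone (ssval i).1], Cone).

Definition gbar (I : seq nat) : AD I := ([ffun i => (ssval i).2], 1%N).

Inductive inB (I : seq nat) : AD I -> Prop :=
  | inB_gen : inB (gbar I)
  | inB_one : inB (ADone I)
  | inB_mul x y : inB x -> inB y -> inB (ADmul x y)
  | inB_imp x y : inB x -> inB y -> inB (ADimp x y).

Definition reduced (I : seq nat) : Prop :=
  (forall m, m \in I -> 0 < m) /\
  (forall m m', m \in I -> m' \in I -> m != m' -> ~~ (m %| m')).

Definition C_embeds_in_B (I : seq nat) : Prop :=
  exists e : nat -> AD I,
    [/\ injective e,
        forall l, inB (e l),
        e Cone = ADone I,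
        forall l m, e (Cmul l m) = ADmul (e l) (e m)
      & forall l m, e (Cimp l m) = ADimp (e l) (e m)].

From mathcomp Require Import all_boot.
From mathcomp Require Import zify.

Set Implicit Arguments. Unset Strict Implicit.

(* The map  c^l |-> (1, ..., 1, c^l)  (the unit in every
   factor L_k, the element c^l in the factor C_omega) is clearly an injective
   hoop homomorphism C_omega -> A_Delta; it remains to see that its image lies
   in B_Delta.  Since the image is generated by the image [c] of c, it suffices
   that [c] is in B_Delta.  Let K be the largest k occurring in Delta.  Every
   L_k-coordinate h of the generator gbar satisfies h < k, so in the
   Lukasiewicz chain L_k the power h^K is 0; hence gbar^K and gbar^(K+1) are
   0 in every L_k-coordinate, while their C_omega-coordinates are c^K and
   c^(K+1).  Therefore  gbar^K -> gbar^(K+1) = (1, ..., 1, c),  an element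
   of B_Delta.  The
   argument works for every finite I. *)

(* In L_k, multiplying by an element strictly below the unit k lowers the
   value by at least one; iterated, this bounds the powers of such elements. *)
Lemma Lmul_lt_unit (k a h n : nat) : h < k -> a <= k - n -> Lmul k a h <= k - n.+1.
Proof. by rewrite /Lmul; lia. Qed.

Lemma Limp_00 (k : nat) : Limp k 0 0 = Lone k.
Proof. by rewrite /Limp subn0 addn0 minnn. Qed.

Lemma Lmul_unit_l (k a : nat) : Lmul k k a = a.
Proof. by rewrite /Lmul addKn. Qed.

Lemma Limp_unit (k : nat) : Limp k k k = k.
Proof. by rewrite /Limp subnn add0n minnn. Qed.

Section Embedding.
Variable I : seq nat.

Lemma Delta2_lt (i : DIdx I) : (ssval i).2 < (ssval i).1.
Proof.
case: i => [[k h] /= /allpairsPdep [k' [h' [_ Hh [-> ->]]]]] /=.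
by move: Hh; rewrite mem_filter mem_iota add0n => /and3P [].
Qed.

Fixpoint gpow (n : nat) : AD I :=
  if n is n'.+1 then ADmul (gpow n') (gbar I) else ADone I.

Lemma gpow_inB (n : nat) : inB (gpow n).
Proof. by elim: n => [|n IH] /=; [exact: inB_one | exact: inB_mul IH (inB_gen I)]. Qed.

Lemma gpow_C (n : nat) : (gpow n).2 = n.
Proof. by elim: n => //= n ->; rewrite /Cmul addn1. Qed.

Lemma gpow_L (n : nat) (i : DIdx I) : (gpow n).1 i <= (ssval i).1 - n.
Proof.
elim: n => [|n IH] /=; first by rewrite ffunE /Lone subn0.
rewrite !ffunE; exact: Lmul_lt_unit (Delta2_lt i) IH.
Qed.

Definition Kmax : nat := \max_(i : DIdx I) (ssval i).1.

Definition embed (l : nat) : AD I := ([ffun i => Lone (ssval i).1], l).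

Lemma embed_mul (l m : nat) : embed (Cmul l m) = ADmul (embed l) (embed m).
Proof. by rewrite /embed /ADmul; congr (_, _); apply/ffunP => i; rewrite !ffunE Lmul_unit_l. Qed.

Lemma embed_imp (l m : nat) : embed (Cimp l m) = ADimp (embed l) (embed m).
Proof. by rewrite /embed /ADimp; congr (_, _); apply/ffunP => i; rewrite !ffunE Limp_unit. Qed.

Lemma embed_c : embed 1 = ADimp (gpow Kmax) (gpow Kmax.+1).
Proof.
rewrite /ADimp !gpow_C /Cimp subSnn; congr (_, _); apply/ffunP => i.
have le_k : (ssval i).1 <= Kmax by apply: (leq_bigmax i).
have z0 : (gpow Kmax).1 i = 0 by have := gpow_L Kmax i; lia.
have z1 : (gpow Kmax.+1).1 i = 0 by have := gpow_L Kmax.+1 i; lia.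
by rewrite [LHS]ffunE [RHS]ffunE z0 z1 Limp_00.
Qed.

Lemma embed_inB (l : nat) : inB (embed l).
Proof.
have c_inB : inB (embed 1).
  by rewrite embed_c; exact: inB_imp (gpow_inB _) (gpow_inB _).
elim: l => [|l IH]; first exact: inB_one.
by rewrite -addn1 -[l + 1]/(Cmul l 1) embed_mul; exact: inB_mul.
Qed.

End Embedding.

Theorem theorem3p11 (I : seq nat) :
  reduced I -> C_embeds_in_B I.
Proof.
move=> _; exists (@embed I); split.
- by move=> l m [].
- exact: embed_inB.
- by [].
- exact: embed_mul.
- exact: embed_imp.
Qed.
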